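(* Let $\gamma\in(0,1)$ and let $\rho(w,t)>0$, $w>0$, $t\ge0$, be a sufficiently smooth solution of the yard-sale model equation $$\partial_t\rho(w,t)=\partial_w^2\Big[\Big(\frac{\gamma}{2}\int_0^\infty \min(w,x)^2\,\rho(x,t)\,dx\Big)\rho(w,t)\Big],$$ with $\rho(0,t)=0$, $\lim_{w\to\infty}\rho(w,t)=0$ for $t>0$, and initial condition $\rho_0$ a positive probability density on $(0,\infty)$ with $\int_0^\infty\rho_0(w)\,dw=1=\int_0^\infty w\,\rho_0(w)\,dw$; assume also that the boundary terms at $w=0$ vanish, i.e. $D\rho\to0$ and $w\,\partial_w(D\rho)\to0$ and $\partial_w(D\rho)\to 0$ as $w\to0^+$, where $D[w,t,\rho]=\frac{\gamma}{2}\int_0^\infty\min(w,x)^2\rho(x,t)\,dx$. Let $F(w,t)=\int_0^w\rho(y,t)\,dy$, $G(\cdot,t)$ its inverse, and $\mathcal{L}(f,t)=\int_0^{G(f,t)}y\,\rho(y,t)\,dy$ the Lorenz curve. Then for $f\in(0,1)$, $t>0$, $$\partial_t\mathcal{L}(f,t)=-\frac{1}{\partial_f^2\mathcal{L}(f,t)}\,\frac{\gamma}{2}\int_0^1\min\big(\partial_g\mathcal{L}(g,t),\,\partial_f\mathcal{L}(f,t)\big)^2\,dg .$$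
   Context: Here $\min(a,b)$ is the minimum of $a$ and $b$. The equation models the evolution of the density of agents in wealth space $w>0$; it conserves total probability and total wealth (first moment), both normalized to $1$. *)

From Stdlib Require Import Reals.
From Coquelicot Require Import Coquelicot.
Open Scope R_scope.

Definition cont_half (h : R -> R -> R) (w t : R) : Prop :=
  filterlim (fun p : R * R => h (fst p) (snd p))
    (within (fun p : R * R => 0 <= fst p) (locally (w, t)))
    (locally (h w t)).

Definition Dcoef (gamma : R) (rho : R -> R -> R) (w t : R) : R :=
  gamma / 2 * RInt_gen (fun x => (Rmin w x) ^ 2 * rho x t)
                (at_point 0) (Rbar_locally p_infty).

Definition Fcdf (rho : R -> R -> R) (w t : R) : R :=
  RInt (fun y => rho y t) 0 w.

Definition Lorenz (rho : R -> R -> R) (G : R -> R -> R) (f t : R) : R :=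
  RInt (fun y => y * rho y t) 0 (G f t).

From Stdlib Require Import Reals Lra Ranalysis5.
From Coquelicot Require Import Coquelicot.
Open Scope R_scope.

(* Fix t, write c = G(f,t) and Phi = D rho.  Differentiating F(G(f,t),t) = f gives
   d_f G = 1 / rho(G), hence d_f L = G(f,t) and d_f^2 L = 1 / rho(c); the substitution x = G(g)
   turns int_0^1 min(G(g), c)^2 dg into int_0^oo min(c, x)^2 rho(x) dx, so the right-hand
   side equals -Phi(c).  In time, L(f,s) = int_0^{G(f,s)} (y - c) rho(y,s) dy + c f, and
   moving the upper limit from G(f,s) to c costs at most |G(f,s) - c| |F(c,s) - F(c,t)|,
   which is o(s - t).  Hence d_t L = int_0^c (y - c) d_t rho = int_0^c (y - c) Phi'' dy,
   and two integrations by parts together with the boundary conditions at 0 leave -Phi(c). *)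

Lemma ball_of_Rabs (x y : R) (d : posreal) : Rabs (y - x) < d -> ball x d y.
Proof. intros H. exact H. Qed.

Lemma Rabs_of_ball (x y : R) (d : posreal) : ball x d y -> Rabs (y - x) < d.
Proof. intros H. exact H. Qed.

Lemma continuous_of_Rabs_le (k : R -> R) x :
  (forall y, Rabs (k y - k x) <= Rabs (y - x)) -> continuous k x.
Proof.
  intros Hk. apply continuity_pt_filterlim. intros eps Heps.
  exists eps. split; [exact Heps|]. intros y [_ Hy].
  eapply Rle_lt_trans; [apply Hk|exact Hy].
Qed.

Lemma Rmax_0_Rabs_le x y : Rabs (Rmax 0 y - Rmax 0 x) <= Rabs (y - x).
Proof. unfold Rmax, Rabs; repeat destruct Rle_dec; repeat destruct Rcase_abs; lra. Qed.

Lemma Rmin_r_Rabs_le c x y : Rabs (Rmin y c - Rmin x c) <= Rabs (y - x).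
Proof. unfold Rmin, Rabs; repeat destruct Rle_dec; repeat destruct Rcase_abs; lra. Qed.

Lemma continuous_Rmin_r c x : continuous (fun y => Rmin y c) x.
Proof. apply continuous_of_Rabs_le, Rmin_r_Rabs_le. Qed.

Lemma continuous_pow2 x : continuous (fun y => y ^ 2) x.
Proof. apply (ex_derive_continuous (V:=R_NormedModule)). auto_derive. exact I. Qed.

Lemma continuous_shift c x : continuous (fun y => y - c) x.
Proof. apply (ex_derive_continuous (V:=R_NormedModule)). auto_derive. exact I. Qed.

Lemma ex_RInt_of_continuous (k : R -> R) a b :
  (forall x, continuous k x) -> ex_RInt k a b.
Proof. intros Hk. apply (ex_RInt_continuous (V:=R_CompleteNormedModule)). auto. Qed.

Lemma is_derive_RInt_of_continuous (k : R -> R) a x :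
  (forall y, continuous k y) -> is_derive (fun w => RInt k a w) x (k x).
Proof.
  intros Hk. apply (is_derive_RInt k _ a); [|apply Hk].
  apply filter_forall. intros w.
  apply (RInt_correct (V:=R_CompleteNormedModule)), ex_RInt_of_continuous, Hk.
Qed.

Lemma RInt_Rmax_0 (k : R -> R) w :
  0 <= w -> RInt k 0 w = RInt (fun y => k (Rmax 0 y)) 0 w.
Proof.
  intros Hw. apply RInt_ext. intros y Hy.
  rewrite Rmin_left, Rmax_right in Hy by lra. rewrite Rmax_right by lra. reflexivity.
Qed.

Lemma locally_gt_of_continuous (g : R -> R) t a :
  continuous g t -> a < g t -> locally t (fun s => a < g s).
Proof. intros Hg Ha. exact (Hg _ (open_gt a (g t) Ha)). Qed.

Lemma locally_lt_of_continuous (g : R -> R) t b :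
  continuous g t -> g t < b -> locally t (fun s => g s < b).
Proof. intros Hg Hb. exact (Hg _ (open_lt b (g t) Hb)). Qed.

Lemma locally_open_interval a b x : a < x < b -> locally x (fun y => a < y < b).
Proof.
  intros Hx. apply (filter_imp (fun y => a < y /\ y < b)); [tauto|].
  apply filter_and; [apply open_gt|apply open_lt]; tauto.
Qed.

Lemma at_right_lt a b : a < b -> at_right a (fun e => a < e < b).
Proof.
  intros Hab. unfold at_right, within.
  apply (filter_imp (fun e => e < b)); [intros e He Ha; lra|].
  exact (open_lt b a Hab).
Qed.

Lemma filterlim_Rplus {T} {F : (T -> Prop) -> Prop} {FF : Filter F} (u v : T -> R) a b :
  filterlim u F (locally a) -> filterlim v F (locally b) ->
  filterlim (fun x => u x + v x) F (locally (a + b)).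
Proof. intros Hu Hv. exact (filterlim_comp_2 u v Rplus Hu Hv (filterlim_plus a b)). Qed.

Lemma filterlim_Rmult {T} {F : (T -> Prop) -> Prop} {FF : Filter F} (u v : T -> R) a b :
  filterlim u F (locally a) -> filterlim v F (locally b) ->
  filterlim (fun x => u x * v x) F (locally (a * b)).
Proof. intros Hu Hv. exact (filterlim_comp_2 u v Rmult Hu Hv (filterlim_mult a b)). Qed.

Lemma RInt_derive_at_right (k H : R -> R) a b l :
  a < b -> (forall x, continuous k x) ->
  (forall x, a < x <= b -> is_derive H x (k x)) ->
  filterlim H (at_right a) (locally l) ->
  RInt k a b = H b - l.
Proof.
  intros Hab Hk HH Hl.
  assert (Split : at_right a (fun e => RInt k a b = RInt k a e + (H b - H e))).
  { eapply filter_imp; [|exact (at_right_lt a b Hab)]. intros e He.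
    replace (H b - H e) with (RInt k e b).
    - symmetry. apply (RInt_Chasles (V:=R_CompleteNormedModule)); apply ex_RInt_of_continuous, Hk.
    - apply is_RInt_unique, (is_RInt_derive (V:=R_CompleteNormedModule)); [|auto].
      intros x Hx. rewrite Rmin_left, Rmax_right in Hx by lra. apply HH; lra. }
  assert (Hint : filterlim (fun e => RInt k a e) (at_right a) (locally 0)).
  { replace 0 with (RInt k a a) by apply (RInt_point (V:=R_CompleteNormedModule)).
    apply (filterlim_filter_le_1 (F := locally a)); [apply filter_le_within|].
    apply (ex_derive_continuous (V:=R_NormedModule)).
    eexists. apply is_derive_RInt_of_continuous, Hk. }
  assert (Lim : filterlim (fun e => RInt k a e + (H b - H e)) (at_right a)
                  (locally (0 + (H b + -1 * l)))).
  { apply filterlim_Rplus; [exact Hint|]. apply filterlim_Rplus; [apply filterlim_const|].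
    apply (filterlim_ext (fun e => -1 * H e)); [intros; ring|].
    apply filterlim_Rmult; [apply filterlim_const|exact Hl]. }
  assert (Const := filterlim_ext_loc _ _ Split (filterlim_const (RInt k a b))).
  assert (E := filterlim_locally_unique _ _ _ Const Lim). simpl in E. lra.
Qed.

Lemma is_derive_0_of_bound (E u v : R -> R) t dv :
  locally t (fun s => Rabs (E s) <= Rabs (u s) * Rabs (v s - v t)) ->
  continuous u t -> u t = 0 -> is_derive v t dv -> is_derive E t 0.
Proof.
  intros Hb Hu Hu0 Hv.
  assert (E0 : E t = 0).
  { assert (Ht := locally_singleton _ _ Hb). simpl in Ht.
    rewrite Rminus_diag, Rabs_R0, Rmult_0_r in Ht.
    assert (0 <= Rabs (E t)) by apply Rabs_pos. apply Rabs_eq_0. lra. }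
  apply is_derive_Reals in Hv. apply is_derive_Reals. intros eps Heps.
  set (K := Rabs dv + 1).
  assert (HK : 0 < K) by (unfold K; assert (0 <= Rabs dv) by apply Rabs_pos; lra).
  destruct (Hv 1 Rlt_0_1) as [d1 Hd1].
  assert (Hsmall : locally t (fun s => Rabs (u s) < eps / K)).
  { assert (Hek : 0 < eps / K) by (apply Rdiv_lt_0_compat; lra).
    eapply filter_imp; [|exact (proj1 (filterlim_locally u (u t)) Hu (mkposreal _ Hek))].
    intros s Hs. apply Rabs_of_ball in Hs. rewrite Hu0, Rminus_0_r in Hs. exact Hs. }
  destruct (filter_and _ _ Hb Hsmall) as [d2 Hd2].
  assert (Hd : 0 < Rmin d1 d2) by (apply Rmin_pos; apply cond_pos).
  exists (mkposreal _ Hd). intros h Hh0 Hh. simpl in Hh.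
  destruct (Hd2 (t + h)) as [Hbound Hut].
  { apply ball_of_Rabs. replace (t + h - t) with h by ring.
    eapply Rlt_le_trans; [exact Hh|apply Rmin_r]. }
  specialize (Hd1 h Hh0 (Rlt_le_trans _ _ _ Hh (Rmin_l _ _))).
  assert (Hdq : Rabs ((v (t + h) - v t) / h) <= K).
  { assert (Rabs ((v (t + h) - v t) / h) - Rabs dv <= Rabs ((v (t + h) - v t) / h - dv))
      by apply Rabs_triang_inv.
    unfold K. lra. }
  rewrite E0, Rminus_0_r, Rminus_0_r.
  unfold Rdiv in *. rewrite Rabs_mult in *.
  assert (Hih : 0 < Rabs (/ h)) by (apply Rabs_pos_lt, Rinv_neq_0_compat, Hh0).
  apply Rle_lt_trans with (Rabs (u (t + h)) * (Rabs (v (t + h) - v t) * Rabs (/ h))).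
  { rewrite <- Rmult_assoc. apply Rmult_le_compat_r; [lra|exact Hbound]. }
  apply Rle_lt_trans with (Rabs (u (t + h)) * K).
  { apply Rmult_le_compat_l; [apply Rabs_pos|exact Hdq]. }
  replace eps with (eps * / K * K) by (field; lra).
  apply Rmult_lt_compat_r; [exact HK|exact Hut].
Qed.

Lemma Rabs_RInt_mul_le (p q : R -> R) a b M :
  a <= b -> (forall y, continuous p y) -> (forall y, continuous q y) ->
  (forall y, a < y < b -> 0 <= q y /\ Rabs (p y) <= M) ->
  Rabs (RInt (fun y => p y * q y) a b) <= M * RInt q a b.
Proof.
  intros Hab Hp Hq Hpq.
  assert (Cpq : forall y, continuous (fun y => p y * q y) y)
    by (intros; apply (continuous_mult (K:=R_AbsRing)); auto).
  eapply Rle_trans; [apply abs_RInt_le; [exact Hab|apply ex_RInt_of_continuous, Cpq]|].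
  rewrite <- (RInt_scal (V:=R_CompleteNormedModule)) by apply ex_RInt_of_continuous, Hq.
  apply RInt_le; [exact Hab| | |].
  - apply ex_RInt_of_continuous. intros y. apply continuous_Rabs_comp, Cpq.
  - apply ex_RInt_of_continuous. intros y. apply (continuous_scal_r (V:=R_NormedModule)), Hq.
  - intros y Hy. destruct (Hpq y Hy) as [Hqy Hpy].
    rewrite Rabs_mult, (Rabs_pos_eq (q y)) by exact Hqy.
    apply Rmult_le_compat_r; assumption.
Qed.

Lemma RInt_shifted_weight_bound (q : R -> R) c b :
  (forall y, continuous q y) -> (forall y, Rmin c b < y < Rmax c b -> 0 <= q y) ->
  Rabs (RInt (fun y => (y - c) * q y) c b) <= Rabs (b - c) * Rabs (RInt q c b).
Proof.
  intros Hq Hq0.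
  destruct (Rle_dec c b) as [Hcb|Hcb].
  - rewrite Rmin_left, Rmax_right in Hq0 by lra.
    rewrite (Rabs_pos_eq (RInt q c b))
      by (apply RInt_ge_0; [exact Hcb|apply ex_RInt_of_continuous, Hq|exact Hq0]).
    apply Rabs_RInt_mul_le; [exact Hcb|apply continuous_shift|exact Hq|].
    intros y Hy. split; [apply Hq0, Hy|]. rewrite !Rabs_pos_eq; lra.
  - rewrite Rmin_right, Rmax_left in Hq0 by lra.
    rewrite <- (opp_RInt_swap (V:=R_CompleteNormedModule))
      by (apply ex_RInt_of_continuous; intros; apply (continuous_mult (K:=R_AbsRing));
          [apply continuous_shift|apply Hq]).
    rewrite <- (opp_RInt_swap (V:=R_CompleteNormedModule) q) by apply ex_RInt_of_continuous, Hq.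
    unfold opp; simpl. rewrite !Rabs_Ropp.
    rewrite (Rabs_pos_eq (RInt q b c))
      by (apply RInt_ge_0; [lra|apply ex_RInt_of_continuous, Hq|exact Hq0]).
    apply Rabs_RInt_mul_le; [lra|apply continuous_shift|exact Hq|].
    intros y Hy. split; [apply Hq0, Hy|]. rewrite !Rabs_left; lra.
Qed.

Lemma RInt_shift_weight (q : R -> R) c a b :
  ex_RInt (fun y => y * q y) a b -> ex_RInt q a b ->
  RInt (fun y => (y - c) * q y) a b = RInt (fun y => y * q y) a b - c * RInt q a b.
Proof.
  intros E1 E2. apply is_RInt_unique.
  apply (is_RInt_ext (V:=R_NormedModule) (fun y => minus (y * q y) (scal c (q y)))).
  { intros y _. unfold minus, plus, opp, scal; simpl; unfold mult; simpl. ring. }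
  apply (is_RInt_minus (V:=R_NormedModule));
    [apply (RInt_correct (V:=R_CompleteNormedModule)), E1|].
  apply (is_RInt_scal (V:=R_NormedModule)), (RInt_correct (V:=R_CompleteNormedModule)), E2.
Qed.

Lemma RInt_shift_second_derive (Phi k : R -> R) c :
  0 < c -> (forall y, continuous k y) ->
  (forall y, 0 < y -> ex_derive Phi y /\ ex_derive_n Phi 2 y /\ k y = Derive_n Phi 2 y) ->
  filterlim Phi (at_right 0) (locally 0) ->
  filterlim (fun y => y * Derive Phi y) (at_right 0) (locally 0) ->
  filterlim (Derive Phi) (at_right 0) (locally 0) ->
  RInt (fun y => (y - c) * k y) 0 c = - Phi c.
Proof.
  intros Hc Hk HPhi Hb0 Hb1 Hb2.
  set (H := fun y => (y - c) * Derive Phi y - Phi y).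
  rewrite (RInt_derive_at_right _ H 0 c 0); [unfold H; simpl; lra|lra| | |].
  - intros y. apply (continuous_mult (K:=R_AbsRing)); [apply continuous_shift|apply Hk].
  - intros y Hy. destruct (HPhi y (proj1 Hy)) as [D1 [D2 Hky]]. rewrite Hky.
    assert (Dl : is_derive (fun y => y - c) y 1) by (auto_derive; [exact I|ring]).
    assert (Dm := is_derive_mult _ _ _ _ _ Dl (Derive_correct _ _ D2)
                    ltac:(intros; apply Rmult_comm)).
    assert (Dt := is_derive_minus _ _ _ _ _ Dm (Derive_correct _ _ D1)).
    replace ((y - c) * Derive_n Phi 2 y) with
      (minus (plus (mult 1 (Derive Phi y)) (mult (y - c) (Derive_n Phi 2 y))) (Derive Phi y))
      by (unfold minus, plus, mult, opp; simpl; ring).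
    exact Dt.
  - apply (filterlim_ext (fun y => y * Derive Phi y + (- c * Derive Phi y + -1 * Phi y))).
    { intros y. unfold H. ring. }
    assert (L := filterlim_Rplus _ _ _ _ Hb1 (filterlim_Rplus _ _ _ _
                   (filterlim_Rmult _ _ _ _ (filterlim_const (- c)) Hb2)
                   (filterlim_Rmult _ _ _ _ (filterlim_const (-1)) Hb0))).
    replace (0 + (- c * 0 + -1 * 0)) with 0 in L by lra. exact L.
Qed.

Lemma is_derive_inverse (F dF G : R -> R) lb ub x :
  (forall y, is_derive F y (dF y)) ->
  (forall y, lb <= y <= ub -> F (G y) = y) ->
  continuous G x -> lb < x < ub -> G lb <= G x <= G ub -> dF (G x) <> 0 ->
  is_derive G x (1 / dF (G x)).
Proof.
  intros HF HFG HGc Hx HGx HdF.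
  pose (Prf := fun a (_ : G lb <= a <= G ub) =>
    exist (fun l => derivable_pt_lim F a l) (dF a) (proj1 (is_derive_Reals _ _ _) (HF a))).
  apply is_derive_Reals.
  exact (derivable_pt_lim_recip_interv F G lb ub x Prf
    (proj2 (continuity_pt_filterlim G x) HGc) ltac:(lra) Hx HGx HFG HdF).
Qed.

Lemma cont_half_Rabs (h : R -> R -> R) w t : cont_half h w t ->
  forall eps, 0 < eps -> exists d, 0 < d /\ forall u v, 0 <= u ->
    Rabs (u - w) < d -> Rabs (v - t) < d -> Rabs (h u v - h w t) < eps.
Proof.
  intros H eps He.
  destruct (H _ (locally_ball (h w t) (mkposreal eps He))) as [d Hd].
  exists d. split; [apply cond_pos|]. intros u v Hu Huw Hvt.
  exact (Rabs_of_ball _ _ (mkposreal eps He)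
    (Hd (u, v) (conj (ball_of_Rabs _ _ _ Huw) (ball_of_Rabs _ _ _ Hvt)) Hu)).
Qed.

Lemma continuous_cont_half_slice (h : R -> R -> R) t :
  (forall w, 0 <= w -> cont_half h w t) ->
  forall y, continuous (fun y => h (Rmax 0 y) t) y.
Proof.
  intros H y. apply continuity_pt_filterlim. intros eps He.
  destruct (cont_half_Rabs h _ _ (H (Rmax 0 y) (Rmax_l _ _)) eps He) as [d [Hd P]].
  exists d. split; [exact Hd|]. intros y' [_ Hy']. apply P; [apply Rmax_l| |].
  - eapply Rle_lt_trans; [|exact Hy']. apply Rmax_0_Rabs_le.
  - rewrite Rminus_diag, Rabs_R0. exact Hd.
Qed.

Lemma continuity_2d_cont_half (h : R -> R -> R) y t : cont_half h (Rmax 0 y) t ->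
  continuity_2d_pt (fun u v => h (Rmax 0 v) u) t y.
Proof.
  intros H eps. destruct (cont_half_Rabs h _ _ H eps (cond_pos eps)) as [d [Hd P]].
  exists (mkposreal d Hd). intros u v Hu Hv. simpl in *.
  apply P; [apply Rmax_l| |exact Hu]. eapply Rle_lt_trans; [apply Rmax_0_Rabs_le|exact Hv].
Qed.

Section Quantile.

Variables r G : R -> R.

(* [r] is a density on [0, +oo); its continuity there is encoded as continuity of
   [r (Rmax 0 y)] on all of R. *)
Hypothesis r_cont : forall y, continuous (fun y => r (Rmax 0 y)) y.
Hypothesis r_pos : forall w, 0 < w -> 0 < r w.
Hypothesis G_quantile : forall g, 0 < g < 1 -> 0 < G g /\ RInt r 0 (G g) = g.

Lemma continuous_weighted (h : R -> R) :
  (forall y, continuous h y) -> forall y, continuous (fun y => h y * r (Rmax 0 y)) y.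
Proof. intros Hh y. apply (continuous_mult (K:=R_AbsRing) h); auto. Qed.

Lemma RInt_weighted_Rmax_0 (h : R -> R) a b : 0 <= a -> 0 <= b ->
  RInt (fun y => h y * r y) a b = RInt (fun y => h y * r (Rmax 0 y)) a b.
Proof.
  intros Ha Hb. apply RInt_ext. intros y Hy. rewrite (Rmax_right 0 y); [reflexivity|].
  assert (Rmin a b >= 0) by (unfold Rmin; destruct Rle_dec; lra). lra.
Qed.

Lemma ex_RInt_weighted (h : R -> R) a b :
  (forall y, continuous h y) -> 0 <= a -> 0 <= b -> ex_RInt (fun y => h y * r y) a b.
Proof.
  intros Hh Ha Hb. apply (ex_RInt_ext (fun y => h y * r (Rmax 0 y))).
  - intros y Hy. rewrite Rmax_right; [reflexivity|].
    assert (Rmin a b >= 0) by (unfold Rmin; destruct Rle_dec; lra). lra.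
  - apply ex_RInt_of_continuous, continuous_weighted, Hh.
Qed.

Lemma ex_RInt_density a b : 0 <= a -> 0 <= b -> ex_RInt r a b.
Proof.
  intros Ha Hb. apply (ex_RInt_ext (fun y => 1 * r y)); [intros; apply Rmult_1_l|].
  apply ex_RInt_weighted; auto. intros; apply continuous_const.
Qed.

Lemma is_derive_RInt_weighted (h : R -> R) x :
  (forall y, continuous h y) -> 0 < x ->
  is_derive (fun w => RInt (fun y => h y * r y) 0 w) x (h x * r x).
Proof.
  intros Hh Hx.
  apply (is_derive_ext_loc (fun w => RInt (fun y => h y * r (Rmax 0 y)) 0 w)).
  - eapply filter_imp; [|exact (open_gt 0 x Hx)]. intros w Hw.
    symmetry. apply RInt_weighted_Rmax_0; lra.
  - replace (h x * r x) with (h x * r (Rmax 0 x)) by (rewrite Rmax_right; lra).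
    apply (is_derive_RInt_of_continuous (fun y => h y * r (Rmax 0 y))), continuous_weighted, Hh.
Qed.

Lemma cdf_lt a b : 0 <= a -> a < b -> RInt r 0 a < RInt r 0 b.
Proof.
  intros Ha Hab.
  rewrite <- (RInt_Chasles (V:=R_CompleteNormedModule) r 0 a b)
    by (apply ex_RInt_density; lra).
  assert (0 < RInt r a b); [|simpl; unfold plus; simpl; lra].
  rewrite (RInt_ext r (fun y => r (Rmax 0 y))).
  - apply RInt_gt_0; auto. intros y Hy. rewrite Rmax_right by lra. apply r_pos; lra.
  - intros y Hy. rewrite Rmin_left, Rmax_right in Hy by lra. rewrite Rmax_right by lra.
    reflexivity.
Qed.

Lemma cdf_le a b : 0 <= a <= b -> RInt r 0 a <= RInt r 0 b.
Proof. intros Hab. destruct (Req_dec a b) as [->|]; [lra|]. left; apply cdf_lt; lra. Qed.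

Lemma quantile_gt a g : 0 <= a -> 0 < g < 1 -> RInt r 0 a < g -> a < G g.
Proof.
  intros Ha Hg Hag. destruct (G_quantile g Hg) as [HG0 HGg].
  destruct (Rlt_le_dec a (G g)) as [|Hle]; [assumption|].
  assert (RInt r 0 (G g) <= RInt r 0 a) by (apply cdf_le; lra). lra.
Qed.

Lemma quantile_lt b g : 0 <= b -> 0 < g < 1 -> g < RInt r 0 b -> G g < b.
Proof.
  intros Hb Hg Hgb. destruct (G_quantile g Hg) as [HG0 HGg].
  destruct (Rlt_le_dec (G g) b) as [|Hle]; [assumption|].
  assert (RInt r 0 b <= RInt r 0 (G g)) by (apply cdf_le; lra). lra.
Qed.

Lemma quantile_lt_mono g h : 0 < g -> g < h -> h < 1 -> G g < G h.
Proof.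
  intros Hg Hgh Hh. destruct (G_quantile h) as [HGh Fh]; [lra|].
  apply quantile_lt; lra.
Qed.

Lemma quantile_le_mono g h : 0 < g -> g <= h -> h < 1 -> G g <= G h.
Proof.
  intros Hg Hgh Hh. destruct (Req_dec g h) as [->|]; [lra|].
  left; apply quantile_lt_mono; lra.
Qed.

Lemma quantile_continuous f : 0 < f < 1 -> continuous G f.
Proof.
  intros Hf. destruct (G_quantile f Hf) as [Hc Fc].
  apply filterlim_locally. intros eps.
  set (d := Rmin eps (G f / 2)).
  assert (Hd : 0 < d) by (apply Rmin_pos; [apply cond_pos|lra]).
  assert (Hde : d <= eps) by apply Rmin_l.
  assert (Hdc : d <= G f / 2) by apply Rmin_r.
  assert (Hlo : RInt r 0 (G f - d) < f) by (rewrite <- Fc at 2; apply cdf_lt; lra).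
  assert (Hhi : f < RInt r 0 (G f + d)) by (rewrite <- Fc at 1; apply cdf_lt; lra).
  eapply filter_imp; [|apply filter_and; [apply (locally_open_interval 0 1 f Hf)
                                          |exact (locally_open_interval _ _ f (conj Hlo Hhi))]].
  intros g [Hg Hg']. apply ball_of_Rabs. apply Rabs_def1.
  - assert (G g < G f + d) by (apply quantile_lt; lra). lra.
  - assert (G f - d < G g) by (apply quantile_gt; lra). lra.
Qed.

Lemma quantile_at_right_0 : filterlim G (at_right 0) (locally 0).
Proof.
  apply filterlim_locally. intros eps.
  assert (Heta : 0 < RInt r 0 eps).
  { rewrite <- (RInt_point (V:=R_CompleteNormedModule) 0 r) at 1.
    apply cdf_lt; [lra|apply cond_pos]. }
  unfold at_right, within.
  eapply filter_imp; [|exact (open_lt (Rmin 1 (RInt r 0 eps)) 0 (Rmin_pos _ _ Rlt_0_1 Heta))].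
  intros g Hg Hg0. simpl in Hg.
  assert (Hg1 := Rmin_l 1 (RInt r 0 eps)). assert (Hg2 := Rmin_r 1 (RInt r 0 eps)).
  destruct (G_quantile g) as [HG0 _]; [lra|].
  assert (G g < eps) by (apply quantile_lt; [left; apply cond_pos|lra|lra]).
  apply ball_of_Rabs. rewrite Rminus_0_r, Rabs_pos_eq; lra.
Qed.

Lemma is_derive_quantile f : 0 < f < 1 -> is_derive G f (1 / r (G f)).
Proof.
  intros Hf. destruct (G_quantile f Hf) as [Hc _].
  rewrite <- (Rmax_right 0 (G f)) by lra.
  apply (is_derive_inverse (fun w => RInt (fun y => r (Rmax 0 y)) 0 w) (fun y => r (Rmax 0 y))
           G (f / 2) ((1 + f) / 2)).
  - intros y. apply (is_derive_RInt_of_continuous (fun y => r (Rmax 0 y))), r_cont.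
  - intros y Hy. destruct (G_quantile y) as [Hy0 Fy]; [lra|].
    rewrite <- RInt_Rmax_0; lra.
  - apply quantile_continuous, Hf.
  - lra.
  - split; apply quantile_le_mono; lra.
  - rewrite Rmax_right by lra. apply Rgt_not_eq, r_pos, Hc.
Qed.

Lemma is_derive_RInt_quantile (h : R -> R) g :
  (forall y, continuous h y) -> 0 < g < 1 ->
  is_derive (fun k => RInt (fun y => h y * r y) 0 (G k)) g (h (G g)).
Proof.
  intros Hh Hg. destruct (G_quantile g Hg) as [Hc _].
  assert (D := is_derive_comp _ _ _ _ _ (is_derive_RInt_weighted h (G g) Hh Hc)
                 (is_derive_quantile g Hg)).
  replace (h (G g)) with (scal (1 / r (G g)) (h (G g) * r (G g))); [exact D|].
  unfold scal; simpl; unfold mult; simpl. field. apply Rgt_not_eq, r_pos, Hc.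
Qed.

Lemma RInt_quantile_at_right_0 (h : R -> R) :
  (forall y, continuous h y) ->
  filterlim (fun g => RInt (fun y => h y * r y) 0 (G g)) (at_right 0) (locally 0).
Proof.
  intros Hh. set (W := fun w => RInt (fun y => h y * r (Rmax 0 y)) 0 w).
  apply (filterlim_ext_loc (fun g => W (G g))).
  - eapply filter_imp; [|exact (at_right_lt 0 1 Rlt_0_1)]. intros g Hg.
    destruct (G_quantile g Hg) as [HGg _]. symmetry. apply RInt_weighted_Rmax_0; lra.
  - eapply filterlim_comp; [exact quantile_at_right_0|].
    replace 0 with (W 0) at 2 by apply (RInt_point (V:=R_CompleteNormedModule)).
    apply (ex_derive_continuous (V:=R_NormedModule)).
    eexists. apply (is_derive_RInt_of_continuous (fun y => h y * r (Rmax 0 y))).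
    apply continuous_weighted, Hh.
Qed.

Lemma Derive_Lorenz g : 0 < g < 1 ->
  Derive (fun k => RInt (fun y => y * r y) 0 (G k)) g = G g.
Proof.
  intros Hg. apply is_derive_unique, (is_derive_RInt_quantile (fun y => y)); [|exact Hg].
  apply continuous_id.
Qed.

Lemma is_derive_Derive_Lorenz f : 0 < f < 1 ->
  is_derive (Derive (fun k => RInt (fun y => y * r y) 0 (G k))) f (1 / r (G f)).
Proof.
  intros Hf. apply (is_derive_ext_loc G); [|apply is_derive_quantile, Hf].
  eapply filter_imp; [|exact (locally_open_interval 0 1 f Hf)].
  intros g Hg. symmetry. apply Derive_Lorenz, Hg.
Qed.

(* [G] is arbitrary outside (0, 1); this is [G ^ 2] on (0, f], frozen beyond [f] and
   extended by 0 below 0 so as to be continuous on all of R. *)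
Definition clamped_quantile_sq f g := if Rlt_dec 0 g then G (Rmin g f) ^ 2 else 0.

Lemma continuous_clamped_quantile_sq f z : 0 < f < 1 -> continuous (clamped_quantile_sq f) z.
Proof.
  intros Hf. unfold clamped_quantile_sq.
  destruct (Rlt_dec 0 z) as [Hz|Hz]; [|destruct (Rlt_dec z 0) as [Hz'|Hz']].
  - apply (continuous_ext_loc _ (fun g => G (Rmin g f) ^ 2)).
    + eapply filter_imp; [|exact (open_gt 0 z Hz)]. intros g Hg.
      destruct Rlt_dec; [reflexivity|lra].
    + apply (continuous_comp _ (fun u => u ^ 2)); [|apply continuous_pow2].
      apply (continuous_comp (fun g => Rmin g f) G); [apply continuous_Rmin_r|].
      apply quantile_continuous. unfold Rmin; destruct Rle_dec; lra.
  - apply (continuous_ext_loc _ (fun _ => 0)); [|apply continuous_const].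
    eapply filter_imp; [|exact (open_lt 0 z Hz')]. intros g Hg.
    destruct Rlt_dec; [lra|reflexivity].
  - replace z with 0 by lra.
    apply filterlim_locally. intros eps.
    assert (He : 0 < Rmin 1 eps) by (apply Rmin_pos; [lra|apply cond_pos]).
    assert (He1 := Rmin_l 1 eps). assert (He2 := Rmin_r 1 eps).
    assert (HG0 := proj1 (filterlim_locally G 0) quantile_at_right_0 (mkposreal _ He)).
    eapply filter_imp; [|apply filter_and; [exact HG0|exact (open_lt f 0 (proj1 Hf))]].
    intros g [Hg Hgf]. apply ball_of_Rabs.
    destruct (Rlt_dec 0 0); [lra|]. destruct (Rlt_dec 0 g) as [Hg0|Hg0].
    + rewrite Rmin_left by lra. specialize (Hg Hg0). apply Rabs_of_ball, Rabs_def2 in Hg.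
      simpl in Hg. rewrite Rminus_0_r, Rabs_pos_eq by (apply pow2_ge_0). nra.
    + rewrite Rminus_diag, Rabs_R0. apply cond_pos.
Qed.

Lemma is_RInt_sq_quantile f : 0 < f < 1 ->
  is_RInt (fun g => Rmin (G g) (G f) ^ 2) 0 f (RInt (fun x => x ^ 2 * r x) 0 (G f)).
Proof.
  intros Hf.
  assert (Hk := fun z => continuous_clamped_quantile_sq f z Hf).
  replace (RInt (fun x => x ^ 2 * r x) 0 (G f)) with (RInt (clamped_quantile_sq f) 0 f).
  2: { rewrite (RInt_derive_at_right _ (fun g => RInt (fun x => x ^ 2 * r x) 0 (G g)) 0 f 0);
         [apply Rminus_0_r|lra|exact Hk| |].
       - intros x Hx. unfold clamped_quantile_sq.
         destruct Rlt_dec; [|lra]. rewrite Rmin_left by lra.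
         apply (is_derive_RInt_quantile (fun y => y ^ 2)); [apply continuous_pow2|lra].
       - apply RInt_quantile_at_right_0, continuous_pow2. }
  apply (is_RInt_ext (clamped_quantile_sq f)).
  - intros g Hg. rewrite Rmin_left, Rmax_right in Hg by lra. unfold clamped_quantile_sq.
    destruct Rlt_dec; [|lra]. rewrite Rmin_left by lra.
    rewrite Rmin_left; [reflexivity|]. apply quantile_le_mono; lra.
  - apply (RInt_correct (V:=R_CompleteNormedModule)), ex_RInt_of_continuous, Hk.
Qed.

Lemma RInt_min_quantile_sq f :
  is_RInt_gen r (at_point 0) (Rbar_locally p_infty) 1 -> 0 < f < 1 ->
  RInt (fun g => Rmin (G g) (G f) ^ 2) 0 1 =
  RInt_gen (fun x => Rmin (G f) x ^ 2 * r x) (at_point 0) (Rbar_locally p_infty).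
Proof.
  intros Hm Hf. destruct (G_quantile f Hf) as [Hc Fc].
  set (c := G f) in *. set (Q := RInt (fun x => x ^ 2 * r x) 0 c).
  assert (Left : is_RInt (fun g => Rmin (G g) c ^ 2) 0 1 (plus Q (scal (1 - f) (c ^ 2)))).
  { apply (is_RInt_Chasles (V:=R_NormedModule) _ 0 f 1); [apply is_RInt_sq_quantile, Hf|].
    apply (is_RInt_ext (V:=R_NormedModule) (fun _ => c ^ 2));
      [|apply (is_RInt_const (V:=R_NormedModule))].
    intros g Hg. rewrite Rmin_left, Rmax_right in Hg by lra.
    rewrite Rmin_right; [reflexivity|]. left; apply quantile_lt_mono; lra. }
  assert (Tail : is_RInt_gen r (at_point c) (Rbar_locally p_infty) (plus (opp f) 1)).
  { apply (is_RInt_gen_Chasles (V:=R_NormedModule) r 0); [|exact Hm].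
    apply is_RInt_gen_at_point, (is_RInt_swap (V:=R_NormedModule)). rewrite <- Fc.
    apply (RInt_correct (V:=R_CompleteNormedModule)), ex_RInt_density; lra. }
  assert (Right : is_RInt_gen (fun x => Rmin c x ^ 2 * r x) (at_point 0) (Rbar_locally p_infty)
                    (plus Q (scal (c ^ 2) (plus (opp f) 1)))).
  { apply (is_RInt_gen_Chasles (V:=R_NormedModule) _ c).
    - apply is_RInt_gen_at_point, (is_RInt_ext (V:=R_NormedModule) (fun x => x ^ 2 * r x)).
      + intros x Hx. rewrite Rmin_left, Rmax_right in Hx by lra.
        rewrite Rmin_right by lra. reflexivity.
      + apply (RInt_correct (V:=R_CompleteNormedModule)), ex_RInt_weighted;
          [apply continuous_pow2|lra|lra].
    - apply (is_RInt_gen_ext (V:=R_NormedModule) (fun y => scal (c ^ 2) (r y)));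
        [|apply (is_RInt_gen_scal (V:=R_NormedModule)), Tail].
      apply (Filter_prod _ _ _ (fun a => a = c) (fun b => c < b)).
      + reflexivity.
      + exists c. intros; assumption.
      + intros a b -> Hb x Hx. simpl in Hx. rewrite Rmin_left, Rmax_right in Hx by lra.
        rewrite Rmin_left by lra. reflexivity. }
  rewrite (is_RInt_unique _ _ _ _ Left), (is_RInt_gen_unique _ _ Right).
  unfold plus, scal, opp; simpl; unfold mult; simpl. ring.
Qed.

End Quantile.

Section TimeDependence.

Variables rho G : R -> R -> R.

Hypothesis rho_pos : forall w t, 0 < w -> 0 <= t -> 0 < rho w t.
Hypothesis rho_cont : forall w t, 0 <= w -> 0 < t -> cont_half rho w t.
Hypothesis rho_ex_derive : forall w t, 0 <= w -> 0 < t -> ex_derive (fun s => rho w s) t.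
Hypothesis rho_derive_cont : forall w t, 0 <= w -> 0 < t ->
  cont_half (fun w' t' => Derive (fun s => rho w' s) t') w t.
Hypothesis G_quantile : forall f t, 0 < f < 1 -> 0 < t ->
  0 < G f t /\ Fcdf rho (G f t) t = f.

Lemma continuous_rho_slice s : 0 < s -> forall y, continuous (fun y => rho (Rmax 0 y) s) y.
Proof. intros Hs. apply continuous_cont_half_slice. intros w Hw. apply rho_cont; assumption. Qed.

Lemma rho_slice_pos s : 0 < s -> forall w, 0 < w -> 0 < rho w s.
Proof. intros Hs w Hw. apply rho_pos; lra. Qed.

Lemma G_slice_quantile s : 0 < s -> forall g, 0 < g < 1 ->
  0 < G g s /\ RInt (fun y => rho y s) 0 (G g s) = g.
Proof. intros Hs g Hg. exact (G_quantile g s Hg Hs). Qed.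

Lemma is_derive_RInt_time (h : R -> R) w t :
  (forall y, continuous h y) -> 0 < t ->
  is_derive (fun s => RInt (fun y => h y * rho (Rmax 0 y) s) 0 w) t
    (RInt (fun y => h y * Derive (fun s => rho (Rmax 0 y) s) t) 0 w).
Proof.
  intros Hh Ht.
  rewrite (RInt_ext _ (fun y => Derive (fun s => h y * rho (Rmax 0 y) s) t))
    by (intros; symmetry; apply Derive_scal).
  apply (is_derive_RInt_param (fun s y => h y * rho (Rmax 0 y) s)).
  - eapply filter_imp; [|exact (open_gt 0 t Ht)]. intros s Hs y _.
    apply ex_derive_scal, rho_ex_derive; [apply Rmax_l|exact Hs].
  - intros y _.
    apply (continuity_2d_pt_ext (fun u v => h v * Derive (fun z => rho (Rmax 0 v) z) u)).
    { intros; rewrite Derive_scal; reflexivity. }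
    apply continuity_2d_pt_mult.
    + apply (continuity_1d_2d_pt_comp h (fun _ v => v));
        [apply continuity_pt_filterlim, Hh|apply continuity_2d_pt_id2].
    + apply (continuity_2d_cont_half (fun w' t' => Derive (fun s => rho w' s) t')).
      apply rho_derive_cont; [apply Rmax_l|exact Ht].
  - eapply filter_imp; [|exact (open_gt 0 t Ht)]. intros s Hs.
    apply ex_RInt_of_continuous. intros z.
    apply (continuous_mult (K:=R_AbsRing) h); [apply Hh|apply continuous_rho_slice, Hs].
Qed.

Lemma Fcdf_Rmax_0 w s : 0 <= w -> Fcdf rho w s = RInt (fun y => rho (Rmax 0 y) s) 0 w.
Proof. intros Hw. exact (RInt_Rmax_0 (fun y => rho y s) w Hw). Qed.

Lemma is_derive_Fcdf_time w t : 0 <= w -> 0 < t ->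
  is_derive (fun s => Fcdf rho w s) t
    (RInt (fun y => 1 * Derive (fun s => rho (Rmax 0 y) s) t) 0 w).
Proof.
  intros Hw Ht. apply (is_derive_ext (fun s => RInt (fun y => 1 * rho (Rmax 0 y) s) 0 w)).
  - intros s. rewrite Fcdf_Rmax_0 by exact Hw. apply RInt_ext. intros; apply Rmult_1_l.
  - apply is_derive_RInt_time; [intros; apply continuous_const|exact Ht].
Qed.

Lemma quantile_continuous_time f t : 0 < f < 1 -> 0 < t -> continuous (fun s => G f s) t.
Proof.
  intros Hf Ht. destruct (G_quantile f t Hf Ht) as [Hc Fc].
  set (c := G f t) in *.
  assert (Fcont : forall w, 0 <= w -> continuous (fun s => Fcdf rho w s) t).
  { intros w Hw. apply (ex_derive_continuous (V:=R_NormedModule)).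
    eexists. apply is_derive_Fcdf_time; assumption. }
  apply filterlim_locally. intros eps.
  set (d := Rmin eps (c / 2)).
  assert (Hd : 0 < d) by (apply Rmin_pos; [apply cond_pos|lra]).
  assert (Hde : d <= eps) by apply Rmin_l.
  assert (Hdc : d <= c / 2) by apply Rmin_r.
  assert (Hlo : Fcdf rho (c - d) t < f).
  { rewrite <- Fc. apply (cdf_lt _ (continuous_rho_slice t Ht) (rho_slice_pos t Ht)); lra. }
  assert (Hhi : f < Fcdf rho (c + d) t).
  { rewrite <- Fc. apply (cdf_lt _ (continuous_rho_slice t Ht) (rho_slice_pos t Ht)); lra. }
  eapply filter_imp; [|apply filter_and; [exact (open_gt 0 t Ht)|apply filter_and;
    [exact (locally_lt_of_continuous _ t f (Fcont (c - d) ltac:(lra)) Hlo)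
    |exact (locally_gt_of_continuous _ t f (Fcont (c + d) ltac:(lra)) Hhi)]]].
  intros s [Hs [Hslo Hshi]].
  assert (Qs := quantile_lt _ _ (continuous_rho_slice s Hs) (rho_slice_pos s Hs)
                  (G_slice_quantile s Hs)).
  assert (Qs' := quantile_gt _ _ (continuous_rho_slice s Hs) (rho_slice_pos s Hs)
                   (G_slice_quantile s Hs)).
  assert (G f s < c + d) by (apply Qs; [lra|exact Hf|exact Hshi]).
  assert (c - d < G f s) by (apply Qs'; [lra|exact Hf|exact Hslo]).
  apply ball_of_Rabs, Rabs_def1; cbv beta; fold c; lra.
Qed.

Lemma Lorenz_shift f s c : 0 < f < 1 -> 0 < s ->
  Lorenz rho G f s = RInt (fun y => (y - c) * rho (Rmax 0 y) s) 0 (G f s) + c * f.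
Proof.
  intros Hf Hs. destruct (G_quantile f s Hf Hs) as [HG0 HF].
  rewrite <- HF at 3. unfold Lorenz. rewrite (Fcdf_Rmax_0 _ _ (Rlt_le _ _ HG0)).
  rewrite RInt_shift_weight.
  - enough (RInt (fun y => y * rho y s) 0 (G f s)
            = RInt (fun y => y * rho (Rmax 0 y) s) 0 (G f s)) by lra.
    apply (RInt_weighted_Rmax_0 (fun y => rho y s) (fun y => y)); lra.
  - apply ex_RInt_of_continuous. intros z.
    apply (continuous_mult (K:=R_AbsRing)); [apply continuous_id|apply continuous_rho_slice, Hs].
  - apply ex_RInt_of_continuous, continuous_rho_slice, Hs.
Qed.

Lemma Lorenz_remainder_bound f t s : 0 < f < 1 -> 0 < t -> 0 < s ->
  Rabs (RInt (fun y => (y - G f t) * rho (Rmax 0 y) s) 0 (G f s)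
        - RInt (fun y => (y - G f t) * rho (Rmax 0 y) s) 0 (G f t))
  <= Rabs (G f s - G f t) * Rabs (Fcdf rho (G f t) s - Fcdf rho (G f t) t).
Proof.
  intros Hf Ht Hs.
  destruct (G_quantile f t Hf Ht) as [Hc Fc]. destruct (G_quantile f s Hf Hs) as [Hcs Fcs].
  set (c := G f t) in *.
  assert (Exq := fun a b => ex_RInt_of_continuous _ a b (continuous_rho_slice s Hs)).
  assert (Exl : forall a b, ex_RInt (fun y => (y - c) * rho (Rmax 0 y) s) a b).
  { intros a b. apply ex_RInt_of_continuous. intros y.
    apply (continuous_mult (K:=R_AbsRing));
      [apply continuous_shift|apply continuous_rho_slice, Hs]. }
  replace (RInt (fun y => (y - c) * rho (Rmax 0 y) s) 0 (G f s)
           - RInt (fun y => (y - c) * rho (Rmax 0 y) s) 0 c)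
    with (RInt (fun y => (y - c) * rho (Rmax 0 y) s) c (G f s)).
  2: { rewrite <- (RInt_Chasles (V:=R_CompleteNormedModule) _ 0 c (G f s)) by apply Exl.
       unfold plus; simpl. lra. }
  replace (Fcdf rho c s - Fcdf rho c t) with (- RInt (fun y => rho (Rmax 0 y) s) c (G f s)).
  2: { replace (Fcdf rho c t) with (Fcdf rho (G f s) s) by lra.
       rewrite !Fcdf_Rmax_0 by lra.
       rewrite <- (RInt_Chasles (V:=R_CompleteNormedModule) _ 0 c (G f s)) by apply Exq.
       unfold plus; simpl. lra. }
  rewrite Rabs_Ropp. apply RInt_shifted_weight_bound; [apply continuous_rho_slice, Hs|].
  intros y Hy. assert (Hy0 : 0 < y) by (unfold Rmin in Hy; destruct Rle_dec; lra).
  apply Rlt_le, rho_pos; [|lra]. eapply Rlt_le_trans; [exact Hy0|apply Rmax_r].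
Qed.

Lemma is_derive_Lorenz_time f t : 0 < f < 1 -> 0 < t ->
  is_derive (fun s => Lorenz rho G f s) t
    (RInt (fun y => (y - G f t) * Derive (fun s => rho (Rmax 0 y) s) t) 0 (G f t)).
Proof.
  intros Hf Ht. destruct (G_quantile f t Hf Ht) as [Hc _].
  set (c := G f t) in *.
  set (Lc := fun s => RInt (fun y => (y - c) * rho (Rmax 0 y) s) 0 c).
  set (E := fun s => Lorenz rho G f s - Lc s - c * f).
  assert (DL : is_derive Lc t
                 (RInt (fun y => (y - c) * Derive (fun s => rho (Rmax 0 y) s) t) 0 c)).
  { apply (is_derive_RInt_time (fun y => y - c)); [apply continuous_shift|exact Ht]. }
  (* moving the upper limit from [G f s] to [c] costs o(s - t) *)
  assert (DE : is_derive E t 0).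
  { eapply (is_derive_0_of_bound E (fun s => G f s - c) (fun s => Fcdf rho c s) t).
    - eapply filter_imp; [|exact (open_gt 0 t Ht)]. intros s Hs. unfold E, Lc.
      rewrite (Lorenz_shift f s c Hf Hs).
      replace (RInt (fun y => (y - c) * rho (Rmax 0 y) s) 0 (G f s) + c * f
               - RInt (fun y => (y - c) * rho (Rmax 0 y) s) 0 c - c * f)
        with (RInt (fun y => (y - c) * rho (Rmax 0 y) s) 0 (G f s)
               - RInt (fun y => (y - c) * rho (Rmax 0 y) s) 0 c) by ring.
      apply Lorenz_remainder_bound; assumption.
    - apply (continuous_minus (V:=R_NormedModule) (fun s => G f s));
        [apply quantile_continuous_time; assumption|apply continuous_const].
    - apply Rminus_diag.
    - apply is_derive_Fcdf_time; lra. }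
  assert (D := is_derive_plus _ _ _ _ _ DL
                 (is_derive_plus _ _ _ _ _ DE (is_derive_const (c * f) t))).
  apply (is_derive_ext (fun s => plus (Lc s) (plus (E s) (c * f)))).
  { intros s. unfold E, plus; simpl. ring. }
  replace (RInt (fun y => (y - c) * Derive (fun s => rho (Rmax 0 y) s) t) 0 c)
    with (plus (RInt (fun y => (y - c) * Derive (fun s => rho (Rmax 0 y) s) t) 0 c)
               (plus 0 zero))
    by (unfold plus, zero; simpl; ring).
  exact D.
Qed.

End TimeDependence.

Theorem mainTheorem2 (gamma : R) (rho G : R -> R -> R)
  (Hgamma : 0 < gamma < 1)
  (* positivity *)
  (Hpos : forall w t, 0 < w -> 0 <= t -> 0 < rho w t)
  (* smoothness ("sufficiently smooth") *)
  (Hcont : forall w t, 0 <= w -> 0 < t -> cont_half rho w t)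
  (Hdt : forall w t, 0 <= w -> 0 < t -> ex_derive (fun s => rho w s) t)
  (Hdtcont : forall w t, 0 <= w -> 0 < t ->
      cont_half (fun w' t' => Derive (fun s => rho w' s) t') w t)
  (* the PDE *)
  (Hpde : forall w t, 0 < w -> 0 < t ->
      ex_derive (fun v => Dcoef gamma rho v t * rho v t) w /\
      ex_derive_n (fun v => Dcoef gamma rho v t * rho v t) 2 w /\
      Derive (fun s => rho w s) t
        = Derive_n (fun v => Dcoef gamma rho v t * rho v t) 2 w)
  (* boundary conditions *)
  (Hzero : forall t, 0 < t -> rho 0 t = 0)
  (Hinf : forall t, 0 < t -> is_lim (fun w => rho w t) p_infty 0)
  (* initial condition: probability density with unit mean *)
  (Hinit0 : is_RInt_gen (fun w => rho w 0) (at_right 0) (Rbar_locally p_infty) 1)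
  (Hinit1 : is_RInt_gen (fun w => w * rho w 0) (at_right 0) (Rbar_locally p_infty) 1)
  (* conservation of total probability and wealth *)
  (Hmass : forall t, 0 < t ->
      is_RInt_gen (fun w => rho w t) (at_point 0) (Rbar_locally p_infty) 1)
  (Hmom : forall t, 0 < t ->
      is_RInt_gen (fun w => w * rho w t) (at_point 0) (Rbar_locally p_infty) 1)
  (* vanishing boundary terms at w = 0 *)
  (Hbd0 : forall t, 0 < t ->
      filterlim (fun w => Dcoef gamma rho w t * rho w t) (at_right 0) (locally 0))
  (Hbd1 : forall t, 0 < t ->
      filterlim (fun w => w * Derive (fun v => Dcoef gamma rho v t * rho v t) w)
        (at_right 0) (locally 0))
  (Hbd2 : forall t, 0 < t ->
      filterlim (fun w => Derive (fun v => Dcoef gamma rho v t * rho v t) w)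
        (at_right 0) (locally 0))
  (* G(., t) is the inverse of F(., t) *)
  (HG : forall f t, 0 < f < 1 -> 0 < t ->
      0 < G f t /\ Fcdf rho (G f t) t = f) :
  forall f t, 0 < f < 1 -> 0 < t ->
    ex_derive (fun g => Lorenz rho G g t) f /\
    ex_derive_n (fun g => Lorenz rho G g t) 2 f /\
    is_derive (fun s => Lorenz rho G f s) t
      (- (1 / Derive_n (fun g => Lorenz rho G g t) 2 f)
         * (gamma / 2 * RInt (fun g =>
              (Rmin (Derive (fun h => Lorenz rho G h t) g)
                    (Derive (fun h => Lorenz rho G h t) f)) ^ 2) 0 1)).
Proof.
  intros f t Hf Ht.
  set (r := fun y => rho y t). set (Gt := fun g => G g t).
  assert (Hr := continuous_rho_slice rho Hcont t Ht).
  assert (Hrp := rho_slice_pos rho Hpos t Ht).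
  assert (HGt := G_slice_quantile rho G HG t Ht).
  assert (D2 := is_derive_Derive_Lorenz r Gt Hr Hrp HGt f Hf).
  split; [eexists; exact (is_derive_RInt_quantile r Gt Hr Hrp HGt _ f continuous_id Hf)|].
  split; [eexists; exact D2|].
  replace (Derive_n (fun g => Lorenz rho G g t) 2 f) with (1 / r (Gt f))
    by (symmetry; exact (is_derive_unique _ _ _ D2)).
  rewrite (RInt_ext _ (fun g => Rmin (Gt g) (Gt f) ^ 2)).
  2: { intros g Hg. rewrite Rmin_left, Rmax_right in Hg by lra.
       rewrite <- (Derive_Lorenz r Gt Hr Hrp HGt g), <- (Derive_Lorenz r Gt Hr Hrp HGt f) by lra.
       reflexivity. }
  rewrite (RInt_min_quantile_sq r Gt Hr Hrp HGt f (Hmass t Ht) Hf).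
  destruct (HG f t Hf Ht) as [Hc _].
  assert (TD := is_derive_Lorenz_time rho G Hpos Hcont Hdt Hdtcont HG f t Hf Ht).
  rewrite (RInt_shift_second_derive (fun v => Dcoef gamma rho v t * rho v t) _ (G f t) Hc)
    in TD; [| |intros y Hy; rewrite Rmax_right by lra; apply Hpde; assumption
           |apply Hbd0, Ht|apply Hbd1, Ht|apply Hbd2, Ht].
  - replace (- (1 / (1 / r (Gt f))) * (gamma / 2 * RInt_gen (fun x => Rmin (Gt f) x ^ 2 * r x)
               (at_point 0) (Rbar_locally p_infty)))
      with (- (Dcoef gamma rho (G f t) t * rho (G f t) t)); [exact TD|].
    unfold Dcoef, Gt, r. field. apply Rgt_not_eq, Hpos; lra.
  - apply (continuous_cont_half_slice (fun w' t' => Derive (fun s => rho w' s) t')).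
    intros w Hw. apply Hdtcont; assumption.
Qed.
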